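(* Let $n\ge1$ be an integer, $I,\Lambda$ non-empty sets, $P$ a $\Lambda\times I$ matrix with entries in $\mathbb{Z}_{n}\cup\{\mathbf{0}\}$, and $S=M^{0}[\mathbb{Z}_{n};I,\Lambda;P]$. Let $A$ be a finite alphabet, $\varphi:A\to S$ any map, and $\bar\varphi:A^{+}\to S$ its unique extension to a semigroup morphism. Then the language $\mathbf{0}\bar\varphi^{-1}\subseteq A^{+}$ has generalised star-height $0$.
   Context: $\mathbb{Z}_n$ is the cyclic group of order $n$ written additively. For a group $G$, non-empty sets $I,\Lambda$ and a $\Lambda\times I$ matrix $P=(p_{\lambda i})$ with entries in $G\cup\{\mathbf{0}\}$ ($\mathbf{0}$ a new symbol), the Rees zero-matrix semigroup $M^{0}[G;I,\Lambda;P]$ is $(I\times G\times\Lambda)\cup\{\mathbf{0}\}$ with $(i,g,\lambda)(j,h,\mu)=(i,g\,p_{\lambda j}\,h,\mu)$ if $p_{\lambda j}\ne\mathbf{0}$, $=\mathbf{0}$ if $p_{\lambda j}=\mathbf{0}$, and $x\mathbf{0}=\mathbf{0}x=\mathbf{0}$. Generalised regular expressions over $A$: $\emptyset$, $\varepsilon$ and each letter are expressions; if $E,F$ are expressions so are $E\cup F$, $EF$, $E^{\ast}$, $E^{c}$ (complement in $A^{\ast}$). Star-height: $h(\emptyset)=h(\varepsilon)=h(a)=0$, $h(E\cup F)=h(EF)=\max\{h(E),h(F)\}$, $h(E^{\ast})=h(E)+1$, $h(E^{c})=h(E)$; the star-height of a language is the minimum of $h(E)$ over expressions $E$ representing it.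 *)

From mathcomp Require Import all_boot all_order all_algebra.
Set Implicit Arguments. Unset Strict Implicit. Unset Printing Implicit Defensive.
Import GRing.Theory.
Local Open Scope ring_scope.

(* ---------- Rees zero-matrix semigroup M^0[G; I, Lambda; P] over an
   additively written group G (zmodType).  The zero element 0 is None. *)
Definition rees (G : zmodType) (I L : Type) : Type := option (I * G * L).

Definition rees_mul (G : zmodType) (I L : Type) (P : L -> I -> option G)
  (x y : rees G I L) : rees G I L :=
  match x, y with
  | Some (i, g, l), Some (j, h, m) =>
      match P l j with
      | Some p => Some (i, g + p + h, m)
      | None => None
      end
  | _, _ => None
  end.

Definition rees_ext (G : zmodType) (I L : Type) (P : L -> I -> option G)
  (A : Type) (phi : A -> rees G I L) (a : A) (w : seq A) : rees G I L :=
  foldl (fun s b => rees_mul P s (phi b)) (phi a) w.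

(* The language 0 phibar^{-1} subset of A^+ (seen inside A^* ). *)
Definition zero_preimage (G : zmodType) (I L : Type) (P : L -> I -> option G)
  (A : Type) (phi : A -> rees G I L) (w : seq A) : Prop :=
  match w with
  | [::] => False
  | a :: w' => rees_ext P phi a w' = None
  end.

Inductive gre (A : Type) : Type :=
  | GEmpty : gre A
  | GEps : gre A
  | GLetter : A -> gre A
  | GUnion : gre A -> gre A -> gre A
  | GConcat : gre A -> gre A -> gre A
  | GStar : gre A -> gre A
  | GCompl : gre A -> gre A.

Inductive star_lang (A : Type) (Lg : seq A -> Prop) : seq A -> Prop :=
  | star_nil : star_lang Lg [::]
  | star_cons u v : Lg u -> star_lang Lg v -> star_lang Lg (u ++ v).

Fixpoint gre_lang (A : Type) (E : gre A) : seq A -> Prop :=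
  match E with
  | GEmpty => fun _ => False
  | GEps => fun w => w = [::]
  | GLetter a => fun w => w = [:: a]
  | GUnion E F => fun w => gre_lang E w \/ gre_lang F w
  | GConcat E F => fun w => exists u v, w = u ++ v /\ gre_lang E u /\ gre_lang F v
  | GStar E => star_lang (gre_lang E)
  | GCompl E => fun w => ~ gre_lang E w
  end.

Fixpoint star_height (A : Type) (E : gre A) : nat :=
  match E with
  | GEmpty | GEps | GLetter _ => 0%N
  | GUnion E F | GConcat E F => maxn (star_height E) (star_height F)
  | GStar E => (star_height E).+1
  | GCompl E => star_height E
  end.

(* A language has generalised star-height 0 iff some expression of height 0
   represents it (the minimum of heights is 0). *)
Definition gen_star_height0 (A : Type) (Lg : seq A -> Prop) : Prop :=
  exists E : gre A, star_height E = 0%N /\ forall w, gre_lang E w <-> Lg w.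

From mathcomp Require Import all_boot all_order all_algebra.
From Stdlib Require Import Setoid.
Set Implicit Arguments. Unset Strict Implicit. Unset Printing Implicit Defensive.

(* A product x_1 ... x_k in a Rees zero-matrix semigroup is zero exactly when
   some x_i is zero or some adjacent product x_i x_(i+1) is zero: a non-zero
   product x y has the row of x and the column of y, so whether it is killed by
   a further factor z depends on y alone.  Hence the zero language is a finite
   union of languages A^* a A^* and A^* a b A^*, each written with complement
   and concatenation only (A^* being the complement of the empty language). *)

Definition has_adjacent (T : Type) (r : T -> T -> bool) (s : seq T) : bool :=
  has (fun p => r p.1 p.2) (zip s (behead s)).

Lemma has_adjacentP (T : Type) (r : T -> T -> bool) (s : seq T) :
  reflect (exists u a b v, s = u ++ [:: a, b & v] /\ r a b) (has_adjacent r s).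
Proof.
apply: (iffP idP).
- elim: s => [|x [|y s] IH] //= /orP[rxy | /IH[u [a [b [v [-> rab]]]]]].
  + by exists [::], x, y, s.
  + by exists (x :: u), a, b, v.
- move=> [u [a [b [v [-> rab]]]]]; rewrite /has_adjacent.
  elim: u => [|x u IH] /=; first by rewrite rab.
  by case: u IH => [|y u] /= ->; rewrite orbT.
Qed.

Lemma has_adjacent_cons2 (T : Type) (r : T -> T -> bool) x y s :
  has_adjacent r [:: x, y & s] = r x y || has_adjacent r (y :: s).
Proof. by []. Qed.

Lemma has_adjacent_map (T U : Type) (f : T -> U) (r : U -> U -> bool) (s : seq T) :
  has_adjacent r (map f s) = has_adjacent (fun a b => r (f a) (f b)) s.
Proof. by rewrite /has_adjacent; elim: s => [|x [|y s] IH] //=; rewrite IH. Qed.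

Section StarFree.
Variable A : Type.

Definition gre_full : gre A := GCompl (GEmpty A).

Definition gre_factor (E : gre A) : gre A := GConcat gre_full (GConcat E gre_full).

Definition gre_bigU (X : Type) (s : seq X) (f : X -> gre A) : gre A :=
  foldr (fun x E => GUnion (f x) E) (GEmpty A) s.

Lemma gre_lang_factor (E : gre A) (w : seq A) :
  gre_lang (gre_factor E) w <-> exists u z v, w = u ++ z ++ v /\ gre_lang E z.
Proof.
split=> [[u [_ [-> [_ [z [v [-> [Ez _]]]]]]]] | [u [z [v [-> Ez]]]]].
  by exists u, z, v.
by exists u, (z ++ v); split; [|split; [case | exists z, v; split; [|split; [|case]]]].
Qed.

Lemma gre_lang_bigU (X : eqType) (s : seq X) (f : X -> gre A) (w : seq A) :
  gre_lang (gre_bigU s f) w <-> exists2 x, x \in s & gre_lang (f x) w.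
Proof.
elim: s => [|y s IH] /=; first by split=> // [[]].
rewrite IH; split=> [[fy | [x xs fx]] | [x]].
- by exists y; rewrite ?mem_head.
- by exists x; rewrite // in_cons xs orbT.
- by rewrite in_cons => /orP[/eqP-> | xs] fx; [left | right; exists x].
Qed.

Lemma star_height_bigU (X : Type) (s : seq X) (f : X -> gre A) :
  (forall x, star_height (f x) = 0%N) -> star_height (gre_bigU s f) = 0%N.
Proof. by move=> f0; elim: s => //= x s ->; rewrite f0. Qed.

End StarFree.

Section FiniteAlphabet.
Variable A : finType.

Definition gre_has (q : pred A) : gre A :=
  gre_factor (gre_bigU [seq a <- enum A | q a] (@GLetter A)).

Definition gre_has_adjacent (r : rel A) : gre A :=
  gre_factor (gre_bigU [seq p <- enum {: A * A} | r p.1 p.2]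
                       (fun p => GConcat (GLetter p.1) (GLetter p.2))).

Lemma gre_lang_has (q : pred A) (w : seq A) : gre_lang (gre_has q) w <-> has q w.
Proof.
rewrite gre_lang_factor; split.
- move=> [u [z [v [-> /gre_lang_bigU[a]]]]]; rewrite mem_filter => /andP[qa _] /= ->.
  by rewrite has_cat /= qa orbT.
- move=> /hasP[a /splitPr[u v] qa]; exists u, [:: a], v; split=> //.
  by apply/gre_lang_bigU; exists a; rewrite // mem_filter qa mem_enum.
Qed.

Lemma gre_lang_has_adjacent (r : rel A) (w : seq A) :
  gre_lang (gre_has_adjacent r) w <-> has_adjacent r w.
Proof.
rewrite gre_lang_factor; split.
- move=> [u [z [v [-> /gre_lang_bigU[[a b]]]]]].
  rewrite mem_filter => /andP[rab _] [_ [_ [-> [/= -> ->]]]].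
  by apply/has_adjacentP; exists u, a, b, v.
- move=> /has_adjacentP[u [a [b [v [-> rab]]]]]; exists u, [:: a; b], v.
  split=> //; apply/gre_lang_bigU; exists (a, b); first by rewrite mem_filter rab mem_enum.
  by exists [:: a], [:: b].
Qed.

End FiniteAlphabet.

Section ReesZero.
Variables (G : zmodType) (I L : Type) (P : L -> I -> option G).

Local Notation mul := (rees_mul P).

Definition rees_is_zero (x : rees G I L) : bool := if x is None then true else false.
Arguments rees_is_zero : simpl never.

Definition rees_zero_pattern (s : seq (rees G I L)) : bool :=
  has rees_is_zero s || has_adjacent (fun x y => rees_is_zero (mul x y)) s.

Lemma rees_is_zero_mul x y :
  rees_is_zero x || rees_is_zero y -> rees_is_zero (mul x y).
Proof. by case: x y => [[[? ?] ?]|] [[[? ?] ?]|]. Qed.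

Lemma rees_is_zero_mul_column x y z : ~~ rees_is_zero (mul x y) ->
  rees_is_zero (mul (mul x y) z) = rees_is_zero (mul y z).
Proof.
case: x => [[[i g] l]|] //; case: y => [[[j h] k]|] //=.
case: (P l j) => //= p _; case: z => [[[j' h'] k']|] //=.
by case: (P k j').
Qed.

Lemma rees_is_zero_foldl x s :
  rees_is_zero (foldl mul x s) = rees_zero_pattern (x :: s).
Proof.
elim: s x => [|y s IH] x; first by rewrite /rees_zero_pattern /= !orbF.
rewrite [foldl _ _ _]/= IH /rees_zero_pattern /= has_adjacent_cons2.
have [xy0 | xy_nz] := boolP (rees_is_zero (mul x y)); first by rewrite orbT.
have [x_nz y_nz] : ~~ rees_is_zero x /\ ~~ rees_is_zero y.
  by apply/norP; apply: contra xy_nz; apply: rees_is_zero_mul.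
rewrite (negbTE x_nz) (negbTE y_nz) /=.
by case: s {IH} => [|z s] //; rewrite !has_adjacent_cons2 rees_is_zero_mul_column.
Qed.

Lemma rees_ext_foldl (A : Type) (phi : A -> rees G I L) a w :
  rees_ext P phi a w = foldl mul (phi a) (map phi w).
Proof. by rewrite /rees_ext; elim: w (phi a) => //= b w IH s; rewrite IH. Qed.

Lemma zero_preimage_pattern (A : Type) (phi : A -> rees G I L) w :
  zero_preimage P phi w <-> rees_zero_pattern (map phi w).
Proof.
case: w => [|a w] //=; rewrite rees_ext_foldl -map_cons -rees_is_zero_foldl.
by case: foldl.
Qed.

End ReesZero.

(* The witnesses i0, l0 are unused: the argument never needs I or L non-empty. *)
Theorem lemma3p1 (m : nat) (I L : Type) (i0 : I) (l0 : L)
  (P : L -> I -> option 'I_m.+1) (A : finType)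
  (phi : A -> rees 'I_m.+1 I L) :
  gen_star_height0 (zero_preimage P phi).
Proof.
pose zero_letter := fun a => rees_is_zero (phi a).
pose zero_pair := fun a b => rees_is_zero (rees_mul P (phi a) (phi b)).
exists (GUnion (gre_has zero_letter) (gre_has_adjacent zero_pair)); split.
  by rewrite /= !star_height_bigU.
move=> w; rewrite zero_preimage_pattern /rees_zero_pattern has_map has_adjacent_map.
split.
- by case=> [/gre_lang_has | /gre_lang_has_adjacent] ?; apply/orP; [left | right].
- by case/orP=> [/gre_lang_has | /gre_lang_has_adjacent]; [left | right].
Qed.
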